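(* Let $m\ge 2$ and let $\mathcal A=\{A,B_1,\dots,B_m\}$ be a set of $m+1$ agents. There are infinitely many positive integers $a$ for which there exist a prime power $q$, an integer $d>0$ and a distribution type $\tau$ over $\mathcal A$ such that $(m,q,d,\tau)$ are suitable parameters, $\tau_P\in(a,4m^2a)$ for every agent $P\in\mathcal A$, and the shifted projection protocol for $(m,q,d,\tau)$ is informative and perfectly safe.
   Context: A distribution type is a vector $\tau=(\tau_P)_{P\in\mathcal A}$ of positive integers, $|\tau|=\sum_P\tau_P$; the deck $\Omega$ is a set of $|\tau|$ cards; a deal of type $\tau$ is a partition $H=(H_P)_P$ of $\Omega$ with $|H_P|=\tau_P$. Suitable parameters: $(m,q,d,\tau)$ with $m>1$, $q>m$ a prime power, $d>0$ an integer, $|\tau|=q^{d+1}$, $\tau_A=q^{d+1}-q^d$ and $\tau_{B_k}>q^{d-1}$ for each $k\in[1,m]$. Geometry: a transversal hyperplane $V\subseteq\mathbb F_q^{d+1}$ is the set of $x$ with $x_{d+1}=a_1x_1+\dots+a_dx_d+b$; $\sigma(V)=(a_1,\dots,a_d)$. $\pi:\mathbb F_q^{d+1}\to\mathbb F_q^d$ is projection onto the first $d$ coordinates; $\pi^V_\downarrow(w)=\pi(w)+\sigma(V)$ for $w\in V$. Shifted projection protocol (agents speak in order $A,B_1,\dots,B_m$; tokens are maps $\Omega\to\mathbb F_q^{d+1}$ and subsets of $\mathbb F_q^d$): the maximal executions for a deal $H$ are $(H,f,X_1,\dots,X_m)$ with $f:\Omega\to\mathbb F_q^{d+1}$ a bijection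 such that $V=\mathbb F_q^{d+1}\setminus f[H_A]$ is a transversal hyperplane and $X_k=\pi^V_\downarrow[f[H_{B_k}]]$. $\Pi(H,\rho)$ = set of tokens $a$ with $(H,\rho*a)$ an initial segment of a maximal execution. An execution is $(H,\rho)$ with each token of $\rho$ in $\Pi(H,\cdot)$ of the preceding prefix; $\rho$ is a run of $\Pi$ if some $(H,\rho)$ is an execution; $(H,\rho)$ is terminal if $\Pi(H,\rho)=\emptyset$. Informative: for every terminal execution $(H,\rho)$ and agent $P$ there is no execution $(H',\rho)$ with $H'\ne H$, $H'_P=H_P$. Probability model: deal uniform among deals of type $\tau$; then tokens are successively drawn uniformly from $\Pi(H,\rho)$ while nonempty; event ''$\rho$'' = first $|\rho|$ tokens equal $\rho$. Perfectly safe: for every run $\rho$ of $\Pi$, card $c$, agent $P$, $\Pr(c\in H_P\mid\rho)=\tau_P/|\tau|$. *)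

From mathcomp Require Import all_boot all_order all_algebra.
Import GRing.Theory.

(* Agents: [option 'I_m]; [None] is agent A, [Some k] is agent B_(k+1). *)
(* Deck Omega := 'I_(|tau|); field F_q := a finite field F, q = #|F|.     *)

Definition is_prime_power (q : nat) : Prop :=
  exists p k : nat, prime p /\ 0 < k /\ q = p ^ k.

Section Protocol.
Variables (m : nat) (F : finFieldType) (d : nat) (tau : {ffun option 'I_m -> nat}).

Definition total : nat := \sum_(P : option 'I_m) tau P.

Definition deal := {ffun option 'I_m -> {set 'I_total}}.

Definition is_deal (H : deal) : bool :=
  [&& [forall P, #|H P| == tau P],
      [forall P, forall Q, (P != Q) ==> [disjoint H P & H Q]] &
      (\bigcup_(P : option 'I_m) H P == setT)].

Definition token := ({ffun 'I_total -> 'rV[F]_(d.+1)} + {set 'rV[F]_d})%type.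

(* coordinates x_1..x_(d+1) are indices 0..d; x_(d+1) is [ord_max] *)
Definition hyper (a : 'rV[F]_d) (b : F) : {set 'rV[F]_(d.+1)} :=
  [set x : 'rV[F]_(d.+1) | x 0%R ord_max == (\sum_(i < d) a 0%R i * x 0%R (widen_ord (leqnSn d) i) + b)%R].

Definition proj (x : 'rV[F]_(d.+1)) : 'rV[F]_d :=
  \row_(i < d) x 0%R (widen_ord (leqnSn d) i).

(* maximal executions (H, f, X_1, ..., X_m): V = F^(d+1) \ f[H_A] is the
   transversal hyperplane x_(d+1) = a.x + b, so sigma(V) = a, and
   X_k = pi^V_down[f[H_(B_k)]] = { pi(w) + a | w in f[H_(B_k)] }. *)
Definition maxexec (H : deal) (rho : seq token) : bool :=
  [exists f : {ffun 'I_total -> 'rV[F]_(d.+1)}, [exists a : 'rV[F]_d, [exists b : F,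
    [&& injectiveb f, [forall y, [exists x, f x == y]],
        ~: (f @: H None) == hyper a b &
        rho == (inl f : token) ::
               [seq (inr [set (proj w + a)%R | w in f @: H (Some k)] : token)
               | k <- enum 'I_m]]]]].

(* Pi(H, rho): tokens t such that (H, rho * t) is an initial segment of a
   maximal execution (maximal executions have exactly m+1 tokens). *)
Definition Pi (H : deal) (rho : seq token) : {set token} :=
  [set t | [exists s : (m.+1).-tuple token, maxexec H s && prefix (rcons rho t) s]].

Definition tok0 : token := inr set0.

Definition is_exec (H : deal) (rho : seq token) : bool :=
  is_deal H &&
  all (fun i => nth tok0 rho i \in Pi H (take i rho)) (iota 0 (size rho)).

Definition is_run (rho : seq token) : Prop := exists H : deal, is_exec H rho.

Definition is_terminal (H : deal) (rho : seq token) : bool :=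
  is_exec H rho && (Pi H rho == set0).

Definition informative : Prop :=
  forall (H : deal) (rho : seq token) (P : option 'I_m),
    is_terminal H rho ->
    forall H' : deal, is_exec H' rho -> H' P = H P -> H' = H.

Definition n_deals : nat := #|[set H : deal | is_deal H]|.

(* Pr(deal = H and first |rho| tokens = rho) *)
Definition prob_joint (H : deal) (rho : seq token) : rat :=
  if is_exec H rho then
    ((n_deals%:R)^-1 * \prod_(i < size rho) (#|Pi H (take i rho)|%:R)^-1)%R
  else 0%R.

Definition prob_ev (E : pred deal) (rho : seq token) : rat :=
  (\sum_(H : deal | is_deal H && E H) prob_joint H rho)%R.

Definition perfectly_safe : Prop :=
  forall rho : seq token, is_run rho ->
  forall (c : 'I_total) (P : option 'I_m),
    (prob_ev (fun H => c \in H P) rho / prob_ev predT rho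
     = (tau P)%:R / (total)%:R)%R.

End Protocol.

Definition suitable (m q d : nat) (tau : {ffun option 'I_m -> nat}) : Prop :=
  1 < m /\ m < q /\ is_prime_power q /\ 0 < d /\
  (forall P, 0 < tau P) /\
  total m tau = q ^ d.+1 /\
  tau None = q ^ d.+1 - q ^ d /\
  (forall k : 'I_m, q ^ d.-1 < tau (Some k)).

(* A maximal run starts with a bijection f from the deck onto F_q^(d+1) that sends H_A onto
   the complement of a transversal hyperplane V : x_(d+1) = a.x + b; every later token is the
   projection of f[H_(B_k)] shifted by a.  Hence after the first token the run is forced, and
   given f and a each hand H_(B_k) can be read off, because a point of V is determined by its
   projection.  So a deal is recovered from the run once V is known: A knows V directly, and
   B_k knows it because H_(B_k) lies on V while two transversal hyperplanes with different
   slopes meet in at most q^(d-1) < |H_(B_k)| points.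

   Perfect safety comes from the shears (v, y) |-> (v + e', y - e'.v + e), which permute the
   transversal hyperplanes and act transitively on F_q^(d+1).  Conjugated by f, a shear
   relabels the cards so that every execution of a run stays one, with the same probability,
   while any card is moved to any other; so Pr(c in H_P | rho) does not depend on c, and
   averaging over c gives tau_P / |tau|.  The parameters are q = 2^(e+1) in (m, 2m],
   d = n + 2 and tau_(B_k) close to q^(d-1). *)

From Pilot Require Import Defs.
From mathcomp Require Import all_boot all_order all_algebra all_fingroup all_field.
From mathcomp Require Import ring zify.
Import Order.TTheory GRing.Theory Num.Theory.

Set Implicit Arguments.
Unset Strict Implicit.
Unset Printing Implicit Defensive.

Lemma sum_option (T : finType) (G : option T -> nat) :
  \sum_(P : option T) G P = G None + \sum_(k : T) G (Some k).
Proof.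
rewrite (bigD1 None) //=; congr (_ + _).
rewrite (reindex_omap Some id) => [|[k|] //].
by apply: eq_bigl => k; rewrite eqxx.
Qed.

Lemma exists_inj_imset (X Y : finType) (A : {set X}) (B : {set Y}) :
  #|X| = #|Y| -> #|A| = #|B| -> exists2 f : X -> Y, injective f & f @: A = B.
Proof.
move=> eqXY eqAB.
have uniq_enumC (T : finType) (C : {set T}) : uniq (enum C ++ enum (~: C)).
  by rewrite cat_uniq !enum_uniq andbT; apply/hasPn => x; rewrite !mem_enum inE.
have mem_enumC (T : finType) (C : {set T}) x : x \in enum C ++ enum (~: C).
  by rewrite mem_cat !mem_enum inE orbN.
have size_enumC (T : finType) (C : {set T}) : size (enum C ++ enum (~: C)) = #|T|.
  by rewrite size_cat -!cardE cardsC.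
pose sX := enum A ++ enum (~: A); pose sY := enum B ++ enum (~: B).
pose g x := enum_val (cast_ord eqXY (enum_rank x)).
pose f x := nth (g x) sY (index x sX).
have ltX x : index x sX < size sY.
  by rewrite size_enumC -eqXY -(size_enumC _ A) index_mem mem_enumC.
have f_inj : injective f.
  move=> x1 x2; rewrite /f (set_nth_default (g x1) _ (ltX x2)).
  move/eqP; rewrite nth_uniq ?ltX ?uniq_enumC // => /eqP.
  exact: index_inj (mem_enumC _ _ _) (mem_enumC _ _ _).
exists f => //; apply/eqP; rewrite eqEcard card_imset // eqAB leqnn andbT.
apply/subsetP => _ /imsetP[x xA ->].
have ltA : index x (enum A) < size (enum B) by rewrite -cardE -eqAB cardE index_mem mem_enum.
by rewrite /f index_cat mem_enum xA nth_cat ltA -mem_enum mem_nth.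
Qed.

Lemma setC_imset (T : finType) (f : T -> T) (A : {set T}) :
  injective f -> ~: (f @: A) = f @: ~: A.
Proof.
move=> f_inj; apply/setP => y; have /codomP[x ->] := injF_onto f_inj y.
by rewrite !inE !(mem_imset _ _ f_inj) inE.
Qed.

Lemma conj_perm (T U : finType) (f : T -> U) (g : U -> U) :
  bijective f -> injective g -> exists s : {perm T}, forall c, f (s c) = g (f c).
Proof.
case=> f' fK f'K g_inj.
have s_inj : injective (f' \o g \o f).
  by apply: inj_comp (can_inj fK); apply: inj_comp (can_inj f'K) g_inj.
by exists (perm s_inj) => c; rewrite permE /= f'K.
Qed.

Lemma inj_surj_bij (T U : finType) (f : T -> U) :
  injective f -> (forall y, exists x, f x = y) -> bijective f.
Proof.
move=> f_inj f_surj; apply: (inj_card_bij f_inj); rewrite -(card_codom f_inj).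
by apply/subset_leq_card/subsetP => y _; have [x <-] := f_surj y; apply: codom_f.
Qed.

Lemma inj_pred_stable (T : finType) (f : T -> T) (D : pred T) :
  injective f -> (forall x, D x -> D (f x)) -> forall x, D (f x) = D x.
Proof.
move=> f_inj fD x; have imD : f @: [set x | D x] = [set x | D x].
  apply/eqP; rewrite eqEcard card_imset // leqnn andbT.
  by apply/subsetP => _ /imsetP[y + ->]; rewrite !inE => /fD.
apply/idP/idP => [Dfx | /fD //].
have : f x \in f @: [set x | D x] by rewrite imD inE.
by rewrite (mem_imset _ _ f_inj) inE.
Qed.

Section UniformHands.
Local Open Scope ring_scope.
Variables (R : nmodType) (T : finType) (n k : nat).
Variables (hand : T -> {set 'I_n}) (D : pred T) (w : T -> R).
Hypothesis card_hand : forall H, D H -> #|hand H| = k.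
Hypothesis hand_transitive : forall c c', exists Phi : T -> T,
  [/\ injective Phi, forall H, D H -> D (Phi H), forall H, D H -> w (Phi H) = w H
    & forall H, (c' \in hand (Phi H)) = (c \in hand H)].

Lemma sum_hand_uniform c :
  (\sum_(H | D H && (c \in hand H)) w H) *+ n = (\sum_(H | D H) w H) *+ k.
Proof.
pose S c := \sum_(H | D H && (c \in hand H)) w H.
have S_const c' : S c' = S c.
  have [Phi [Phi_inj DPhi wPhi handPhi]] := hand_transitive c c'.
  rewrite /S (reindex_inj Phi_inj); apply: eq_big => [H | H /andP[DH _]].
    by rewrite (inj_pred_stable Phi_inj DPhi) handPhi.
  by rewrite wPhi // -(inj_pred_stable Phi_inj DPhi).
transitivity (\sum_(c' : 'I_n) S c').
  by rewrite (eq_bigr _ (fun c' _ => S_const c')) sumr_const card_ord.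
rewrite /S (exchange_big_dep D) /=; last by move=> i j _ /andP[].
rewrite -sumrMnl; apply: eq_bigr => H DH.
by rewrite (eq_bigl (mem (hand H))) ?sumr_const ?card_hand // => c'; rewrite DH.
Qed.
End UniformHands.

(** * Transversal hyperplanes of F^(d+1) *)

Section TransversalHyperplanes.
Variables (F : finFieldType) (d : nat).
Local Open Scope ring_scope.
Local Notation proj := (@proj F d).
Local Notation hyper := (@hyper F d).

Definition height (x : 'rV[F]_d.+1) : F := x 0 ord_max.

Definition dot (a v : 'rV[F]_d) : F := \sum_(i < d) a 0 i * v 0 i.

Definition pt (v : 'rV[F]_d) (y : F) : 'rV[F]_d.+1 :=
  \row_j (if unlift ord_max j is Some i then v 0 i else y).

Lemma widen_ord_max (i : 'I_d) : widen_ord (leqnSn d) i = lift ord_max i.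
Proof. by apply: val_inj; rewrite /= /bump leqNgt ltn_ord. Qed.

Lemma proj_pt v y : proj (pt v y) = v.
Proof. by apply/rowP => i; rewrite !mxE widen_ord_max liftK. Qed.

Lemma height_pt v y : height (pt v y) = y.
Proof. by rewrite /height mxE unlift_none. Qed.

Lemma ptE x : pt (proj x) (height x) = x.
Proof.
by apply/rowP => j; rewrite mxE; case: unliftP => [i|] ->; rewrite ?mxE ?widen_ord_max.
Qed.

Lemma proj_height_inj x y : proj x = proj y -> height x = height y -> x = y.
Proof. by move=> Ep Eh; rewrite -(ptE x) -(ptE y) Ep Eh. Qed.

Lemma dotDr a u v : dot a (u + v) = dot a u + dot a v.
Proof. by rewrite /dot -big_split; apply: eq_bigr => i _; rewrite !mxE mulrDr. Qed.

Lemma dotZr a t u : dot a (t *: u) = t * dot a u.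
Proof. by rewrite /dot mulr_sumr; apply: eq_bigr => i _; rewrite !mxE mulrCA. Qed.

Lemma dotBl a a' u : dot (a - a') u = dot a u - dot a' u.
Proof. by rewrite /dot -sumrB; apply: eq_bigr => i _; rewrite !mxE mulrBl. Qed.

Lemma dot0r a : dot a 0 = 0.
Proof. by rewrite /dot big1 // => i _; rewrite mxE mulr0. Qed.

Lemma in_hyper a b x : (x \in hyper a b) = (height x == dot a (proj x) + b).
Proof. by rewrite inE /dot; congr (_ == _ + _); apply: eq_bigr => i _; rewrite mxE. Qed.

Lemma card_hyper a b : #|hyper a b| = (#|F| ^ d)%N.
Proof.
have -> : hyper a b = [set pt v (dot a v + b) | v in [set: 'rV[F]_d]].
  apply/setP => x; apply/idP/imsetP => [|[v _ ->]]; last first.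
    by rewrite in_hyper proj_pt height_pt.
  by rewrite in_hyper => /eqP Ex; exists (proj x); rewrite ?inE // -Ex ptE.
by rewrite card_imset ?cardsT ?card_mx ?mul1n // => v w /(congr1 proj); rewrite !proj_pt.
Qed.

Lemma card_dot_eq c e : c != 0 ->
  (#|[set v : 'rV[F]_d | dot c v == e]| * #|F| <= #|F| ^ d)%N.
Proof.
move=> cnz; have [i ci] : exists i, c 0 i != 0.
  apply/existsP; apply: contraR cnz => /existsPn c0.
  by apply/eqP/rowP => i; rewrite mxE; apply/eqP; move/negPn: (c0 i).
pose u : 'rV[F]_d := \row_j (if j == i then (c 0 i)^-1 else 0).
have cu : dot c u = 1.
  rewrite /dot (bigD1 i) //= big1 => [|j /negbTE ji]; last by rewrite mxE ji mulr0.
  by rewrite mxE eqxx addr0 mulfV.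
set L := [set v | _].
pose shift (p : 'rV[F]_d * F) := p.1 + p.2 *: u.
have shift_inj : {in setX L [set: F] &, injective shift}.
  move=> [v t] [v' t']; rewrite !inE /= => /andP[/eqP Lv _] /andP[/eqP Lv' _] E.
  have Et : t = t'.
    by move/(congr1 (dot c)): E; rewrite !dotDr !dotZr cu Lv Lv' !mulr1 => /addrI.
  by move: E; rewrite /shift Et => /addIr /= ->.
have <- : #|{: 'rV[F]_d}| = (#|F| ^ d)%N by rewrite card_mx mul1n.
rewrite -(cardsT F) -cardsX -(card_in_imset shift_inj) -cardsT.
exact/subset_leq_card/subsetT.
Qed.

Lemma card_hyperI a b a' b' : a != a' ->
  (#|hyper a b :&: hyper a' b'| * #|F| <= #|F| ^ d)%N.
Proof.
move=> aa'; rewrite -subr_eq0 in aa'; apply: leq_trans (card_dot_eq (b' - b) aa').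
rewrite leq_mul2r; apply/orP; right.
have proj_inj : {in hyper a b :&: hyper a' b' &, injective proj}.
  move=> x y; rewrite !in_setI !in_hyper => /andP[/eqP Hx _] /andP[/eqP Hy _] E.
  by apply: proj_height_inj; rewrite // Hx Hy E.
rewrite -(card_in_imset proj_inj); apply/subset_leq_card/subsetP => v /imsetP[x + ->].
rewrite in_setI inE !in_hyper dotBl => /andP[/eqP -> /eqP E].
by apply/eqP; rewrite (canRL (addrK b) E); ring.
Qed.

Lemma hyper_inj a b a' b' : hyper a b = hyper a' b' -> a = a' /\ b = b'.
Proof.
move=> E; have aa' : a = a'.
  apply/eqP; apply: contraT => /(card_hyperI b b').
  rewrite -E setIid card_hyper -expnSr leq_exp2l ?ltnn //.
  exact: card_finNzRing_gt1.
split=> //; have : pt 0 b \in hyper a b by rewrite in_hyper proj_pt height_pt dot0r add0r.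
by rewrite E in_hyper proj_pt height_pt dot0r add0r => /eqP.
Qed.

Definition shear (dl : 'rV[F]_d) (e : F) (x : 'rV[F]_d.+1) : 'rV[F]_d.+1 :=
  pt (proj x + dl) (height x - dot dl (proj x) + e).

Lemma proj_shear dl e x : proj (shear dl e x) = proj x + dl.
Proof. exact: proj_pt. Qed.

Lemma height_shear dl e x : height (shear dl e x) = height x - dot dl (proj x) + e.
Proof. exact: height_pt. Qed.

Lemma shear_inj dl e : injective (shear dl e).
Proof.
move=> x y E; have Ep : proj x = proj y.
  by move/(congr1 proj): E; rewrite !proj_shear => /addIr.
apply: proj_height_inj => //.
by move/(congr1 height): E; rewrite !height_shear Ep => /addIr /addIr.
Qed.

Lemma shear_hyper dl e a b :
  shear dl e @: hyper a b = hyper (a - dl) (b + e - dot (a - dl) dl).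
Proof.
apply/eqP; rewrite eqEcard card_imset ?card_hyper ?leqnn ?andbT; last exact: shear_inj.
apply/subsetP => y /imsetP[x + ->]; rewrite !in_hyper => /eqP Ex.
by rewrite proj_shear height_shear Ex dotDr !dotBl; apply/eqP; ring.
Qed.

Lemma shear_transitive x y : exists dl e, shear dl e x = y.
Proof.
exists (proj y - proj x), (height y - height x + dot (proj y - proj x) (proj x)).
apply: proj_height_inj; first by rewrite proj_shear addrC subrK.
by rewrite height_shear; ring.
Qed.

End TransversalHyperplanes.

(** * The shifted projection protocol *)

Section ShiftedProjection.
Variables (m : nat) (F : finFieldType) (d : nat) (tau : {ffun option 'I_m -> nat}).
Local Notation tot := (Defs.total m tau).
Local Notation token := (token m F d tau).
Local Notation deal := (deal m tau).
Local Notation proj := (@proj F d).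
Local Notation hyper := (@hyper F d).
Local Notation maxexec := (@maxexec m F d tau).
Local Notation Pi := (@Pi m F d tau).
Local Notation is_exec := (@is_exec m F d tau).
Local Notation is_deal := (@is_deal m tau).
Local Notation tok0 := (@tok0 m F d tau).
Local Notation prob_joint := (@prob_joint m F d tau).
Local Notation prob_ev := (@prob_ev m F d tau).
Local Notation encoding := {ffun 'I_tot -> 'rV[F]_d.+1}.
Implicit Types (H : deal) (rho : seq token) (f : encoding) (s : {perm 'I_tot}).

Definition max_run (f : encoding) (a : 'rV[F]_d) (H : deal) : seq token :=
  inl f :: [seq inr [set (proj w + a)%R | w in f @: H (Some k)] | k <- enum 'I_m].

Lemma size_max_run f a H : size (max_run f a H) = m.+1.
Proof. by rewrite /= size_map size_enum_ord. Qed.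

Lemma maxexecP H (s : seq token) :
  reflect (exists f a b, [/\ injective f, forall y, exists x, f x = y,
                             ~: (f @: H None) = hyper a b & s = max_run f a H])
          (maxexec H s).
Proof.
apply: (iffP existsP) => [[f /existsP[a /existsP[b]]] | ].
  case/and4P=> /injectiveP fi /forallP fs /eqP hA /eqP ->; exists f, a, b; split=> // y.
  by have /existsP[x /eqP] := fs y; exists x.
case=> f [a [b [fi fs hA ->]]]; exists f; apply/existsP; exists a; apply/existsP; exists b.
apply/and4P; split; [exact/injectiveP | | exact/eqP | exact/eqP].
by apply/forallP => y; have [x <-] := fs y; apply/existsP; exists x.
Qed.

Lemma size_maxexec H (s : seq token) : maxexec H s -> size s = m.+1.
Proof. by case/maxexecP => f [a [b [_ _ _ ->]]]; rewrite size_max_run. Qed.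

Lemma is_dealP H :
  reflect [/\ forall P, #|H P| = tau P, forall P Q, P != Q -> [disjoint H P & H Q]
            & forall c, exists P, c \in H P] (is_deal H).
Proof.
apply: (iffP and3P) => [[/forallP cardH /forallP disjH /eqP coverH]|[cardH disjH coverH]].
  split=> [P | P Q | c]; first exact/eqP.
    by move/forallP: (disjH P) => /(_ Q) /implyP.
  have /bigcupP[P _ cP] : c \in \bigcup_P H P by rewrite coverH inE.
  by exists P.
split; first by apply/forallP => P; apply/eqP.
  by apply/forallP => P; apply/forallP => Q; apply/implyP; apply: disjH.
by apply/eqP/setP => c; rewrite inE; have [P cP] := coverH c; apply/bigcupP; exists P.
Qed.

Lemma PiP H rho (t : token) :
  reflect (exists2 s, maxexec H s & prefix (rcons rho t) s) (t \in Pi H rho).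
Proof.
rewrite inE; apply: (iffP existsP) => [[s /andP[]] | [s ms]]; first by exists s.
by have /eqP sz := size_maxexec ms; exists (Tuple sz); rewrite /= ms.
Qed.

Lemma exec_nil H : is_exec H [::] = is_deal H.
Proof. by rewrite /is_exec /= andbT. Qed.

Lemma execP H rho : rho != [::] ->
  is_exec H rho <-> is_deal H /\ exists2 s, maxexec H s & prefix rho s.
Proof.
move=> rho_nil; have rho_gt0 : 0 < size rho by rewrite lt0n size_eq0.
split=> [/andP[dealH /allP execH] | [dealH [s ms rho_s]]].
  split=> //; have /execH : (size rho).-1 \in iota 0 (size rho).
    by rewrite mem_iota add0n ltn_predL.
  by case/PiP => s ms; rewrite -take_nth ?prednK ?take_size //; exists s.
apply/andP; split=> //; apply/allP => i; rewrite mem_iota add0n => /andP[_ lt_i].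
apply/PiP; exists s; rewrite // -take_nth //.
exact: prefix_trans (prefix_take _ _) rho_s.
Qed.

Lemma in_hyper_B H f a b k c :
  is_deal H -> injective f -> ~: (f @: H None) = hyper a b ->
  c \in H (Some k) -> f c \in hyper a b.
Proof.
case/is_dealP => _ disjH _ f_inj hA cB.
by rewrite -hA inE (mem_imset _ _ f_inj) (disjointFr (disjH (Some k) None isT) cB).
Qed.

Lemma mem_deal_B H f a b k c :
  is_deal H -> injective f -> ~: (f @: H None) = hyper a b ->
  (c \in H (Some k)) =
  (c \notin H None) && (proj (f c) + a \in [set proj w + a | w in f @: H (Some k)])%R.
Proof.
move=> dealH f_inj hA; apply/idP/andP => [cB | [cA /imsetP[_ /imsetP[c' c'B ->] /addIr Ep]]].
  split; last exact/imset_f/imset_f.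
  by case/is_dealP: dealH => _ disjH _; rewrite (disjointFr (disjH (Some k) None isT) cB).
have c_hyp : f c \in hyper a b by rewrite -hA inE (mem_imset _ _ f_inj).
have := in_hyper_B dealH f_inj hA c'B; move: c_hyp; rewrite !in_hyper => /eqP Ec /eqP Ec'.
suff -> : c = c' by [].
by apply: f_inj; apply: proj_height_inj; rewrite // Ec Ec' Ep.
Qed.

Lemma max_run_inj H H' f a b :
  is_deal H -> is_deal H' -> injective f ->
  ~: (f @: H None) = hyper a b -> ~: (f @: H' None) = hyper a b ->
  max_run f a H = max_run f a H' -> H = H'.
Proof.
move=> dealH dealH' f_inj hA hA' [] /eq_in_map runE.
have eqA : H None = H' None by apply: (imset_inj f_inj); apply: setC_inj; rewrite hA hA'.
apply/ffunP => -[k|] //; apply/setP => c.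
rewrite (mem_deal_B k c dealH f_inj hA) (mem_deal_B k c dealH' f_inj hA') eqA.
by case: (runE k (mem_enum _ _)) => ->.
Qed.

Lemma Pi_uniq H rho (t1 t2 : token) :
  rho != [::] -> t1 \in Pi H rho -> t2 \in Pi H rho -> t1 = t2.
Proof.
case: rho => [//|r rho] _ /PiP[s1 + pre1] /PiP[s2 + pre2].
case/maxexecP => f1 [a1 [b1 [_ _ hA1 Es1]]]; case/maxexecP => f2 [a2 [b2 [_ _ hA2 Es2]]].
move: pre1 pre2; rewrite Es1 Es2 /= => /andP[/eqP-> pre1] /andP[/eqP[ff] pre2].
move: hA1; rewrite ff hA2 => /esym/hyper_inj[aa _].
move: pre1 pre2; rewrite ff aa !prefixE !size_rcons => /eqP-> /eqP.
by move/rcons_inj => [].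
Qed.

Lemma terminal_maxexec H rho :
  rho != [::] -> is_exec H rho -> Pi H rho = set0 -> maxexec H rho.
Proof.
move=> rho_nil /(execP H rho_nil)[dealH [s ms rho_s]] Pi0.
have Erho : take (size rho) s = rho by apply/eqP; rewrite -prefixE.
move: (size_prefix rho_s); rewrite (size_maxexec ms) leq_eqVlt => /orP[/eqP sz | lt].
  by rewrite -Erho sz -(size_maxexec ms) take_size.
suff : nth tok0 s (size rho) \in Pi H rho by rewrite Pi0 inE.
apply/PiP; exists s; rewrite // -{1}Erho -take_nth ?(size_maxexec ms) //.
exact: prefix_take.
Qed.

Lemma Pi_nil_neq0 H : tot = (#|F| ^ d.+1)%N -> tau None = (#|F| ^ d.+1 - #|F| ^ d)%N ->
  is_deal H -> Pi H [::] != set0.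
Proof.
move=> tot_tau tauA /is_dealP[cardH _ _].
have cardX : #|'I_tot| = #|{: 'rV[F]_d.+1}| by rewrite card_ord card_mx mul1n tot_tau.
have cardA : #|H None| = #|~: hyper 0%R 0%R|.
  rewrite cardH tauA; have := cardsC (hyper 0%R 0%R); rewrite card_hyper card_mx mul1n.
  by move=> <-; rewrite addKn.
have [g g_inj gA] := exists_inj_imset cardX cardA.
pose f : encoding := [ffun c => g c].
have f_inj : injective f by move=> x y; rewrite !ffunE => /g_inj.
apply/set0Pn; exists (inl f); apply/PiP; exists (max_run f 0 H); last by rewrite /= eqxx prefix0s.
apply/maxexecP; exists f, 0%R, 0%R; split=> //.
- by move=> y; have /codomP[x ->] := inj_card_onto f_inj (eq_leq (esym cardX)) y; exists x.
- by rewrite -[hyper _ _]setCK -gA; congr (~: _); apply: eq_imset => c; rewrite ffunE.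
Qed.

Lemma hand_determines_hyper H H' f a b a' b' P :
  0 < d -> (forall k, #|F| ^ d.-1 < tau (Some k)) -> is_deal H -> is_deal H' -> injective f ->
  ~: (f @: H None) = hyper a b -> ~: (f @: H' None) = hyper a' b' ->
  H' P = H P -> a' = a /\ b' = b.
Proof.
move=> d_gt0 tauB dealH dealH' f_inj hA hA'; case: P => [k|] HP; last first.
  by apply: hyper_inj; rewrite -hA -hA' HP.
have sub_hyp : f @: H (Some k) \subset hyper a b :&: hyper a' b'.
  apply/subsetP => _ /imsetP[c cB ->]; rewrite in_setI (in_hyper_B dealH f_inj hA cB).
  by rewrite (in_hyper_B (k := k) dealH' f_inj hA') ?HP.
have cardB : #|f @: H (Some k)| = tau (Some k).
  by rewrite card_imset //; case/is_dealP: dealH.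
have aa : a' = a.
  apply/eqP; rewrite eq_sym; apply: (contraNT (@card_hyperI _ _ a b a' b')).
  rewrite -ltnNge -[in X in (X < _)%N](prednK d_gt0) expnSr.
  rewrite ltn_pmul2r ?(ltnW (card_finNzRing_gt1 F)) //.
  by apply: leq_trans (tauB k) _; rewrite -cardB subset_leq_card.
split=> //; have : (0 < #|H (Some k)|)%N.
  by rewrite -(card_imset _ f_inj) cardB (leq_ltn_trans (leq0n _) (tauB k)).
case/card_gt0P => c cB; have /subsetP/(_ _ (imset_f f cB)) := sub_hyp.
by rewrite in_setI !in_hyper aa => /andP[/eqP-> /eqP/addrI ->].
Qed.

Theorem shifted_projection_informative : suitable m #|F| d tau -> informative m F d tau.
Proof.
case=> _ [_ [_ [d_gt0 [_ [tot_tau [tauA tauB]]]]]] H rho P /andP[execH /eqP Pi0] H' execH' HP.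
have [rho0|rho_nil] := eqVneq rho [::].
  by move: execH Pi0; rewrite rho0 exec_nil => /(Pi_nil_neq0 tot_tau tauA)/eqP.
have [dealH _] := (execP H rho_nil).1 execH.
have [dealH' [s' ms' rho_s']] := (execP H' rho_nil).1 execH'.
have ms := terminal_maxexec rho_nil execH Pi0.
have Es' : s' = rho.
  by move: rho_s'; rewrite prefixE (size_maxexec ms) -(size_maxexec ms') take_size => /eqP.
case/maxexecP: ms => f [a [b [f_inj _ hA Erho]]].
case/maxexecP: ms' => f' [a' [b' [_ _ hA']]]; rewrite Es' Erho => runE.
have ff : f' = f by case: runE.
rewrite {}ff in hA' runE.
have [aa bb] := hand_determines_hyper d_gt0 tauB dealH dealH' f_inj hA hA' HP.
rewrite {}aa {}bb in hA' runE.
exact: max_run_inj dealH' dealH f_inj hA' hA (esym runE).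
Qed.

Definition relabel (s : {perm 'I_tot}) (H : deal) : deal := [ffun P => s @: H P].

Lemma mem_relabel s H P c : (s c \in relabel s H P) = (c \in H P).
Proof. by rewrite ffunE (mem_imset _ _ perm_inj). Qed.

Lemma relabel_deal s H : is_deal H -> is_deal (relabel s H).
Proof.
case/is_dealP => cardH disjH coverH; apply/is_dealP; split=> [P | P Q PQ | c].
- by rewrite ffunE card_imset ?cardH //; apply: perm_inj.
- by rewrite !ffunE (imset_disjoint perm_inj) disjH.
- by have [P cP] := coverH (s^-1 c)%g; exists P; rewrite -(permKV s c) mem_relabel.
Qed.

Lemma relabelK s : cancel (relabel s) (relabel s^-1).
Proof.
by move=> H; apply/ffunP => P; rewrite !ffunE -imset_comp (eq_imset _ (permK s)) imset_id.
Qed.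

Lemma relabel_inj s : injective (relabel s).
Proof. exact: can_inj (@relabelK s). Qed.

Definition recode (s : {perm 'I_tot}) (t : token) : token :=
  if t is inl f then inl [ffun c => f (s^-1 c)%g] else t.

Lemma recode_inj s : injective (recode s).
Proof.
move=> [f|X] [f'|X'] //= [] /ffunP E; congr inl; apply/ffunP => c.
by move: (E (s c)); rewrite !ffunE permK.
Qed.

Lemma card_Pi_nil_relabel_le s H : #|Pi H [::]| <= #|Pi (relabel s H) [::]|.
Proof.
rewrite -(card_imset _ (@recode_inj s)); apply/subset_leq_card/subsetP.
move=> _ /imsetP[t /PiP[r + + ->]].
case/maxexecP => f [a [b [f_inj f_surj hA ->]]] /= /andP[/eqP-> _].
set f' : encoding := [ffun c => f (s^-1 c)%g].
have imf' P : f' @: relabel s H P = f @: H P.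
  by rewrite ffunE -imset_comp; apply: eq_imset => c; rewrite /= ffunE permK.
apply/PiP; exists (max_run f' a (relabel s H)); last by rewrite /= eqxx prefix0s.
apply/maxexecP; exists f', a, b; split=> //.
- by move=> x y; rewrite !ffunE => /f_inj /perm_inj.
- by move=> y; have [x <-] := f_surj y; exists (s x); rewrite ffunE permK.
- by rewrite imf'.
Qed.

Lemma card_Pi_nil_relabel s H : #|Pi (relabel s H) [::]| = #|Pi H [::]|.
Proof.
apply/eqP; rewrite eqn_leq card_Pi_nil_relabel_le andbT.
by rewrite -{2}(@relabelK s H) card_Pi_nil_relabel_le.
Qed.

Lemma card_Pi_take H rho i :
  is_exec H rho -> i.+1 < size rho -> #|Pi H (take i.+1 rho)| = 1.
Proof.
move=> /andP[_ /allP execH] lt_i.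
have t_in : nth tok0 rho i.+1 \in Pi H (take i.+1 rho) by apply: execH; rewrite mem_iota.
have take_nil : take i.+1 rho != [::] by rewrite -size_eq0 size_take lt_i.
apply/eqP/cards1P; exists (nth tok0 rho i.+1); apply/setP => t; rewrite inE.
by apply/idP/eqP => [t_in' | ->] //; apply: Pi_uniq take_nil t_in' t_in.
Qed.

Lemma prob_joint_relabel s H rho : is_exec H rho -> is_exec (relabel s H) rho ->
  prob_joint (relabel s H) rho = prob_joint H rho.
Proof.
move=> execH execsH; rewrite /prob_joint execH execsH; apply: (congr1 (GRing.mul _)).
apply: eq_bigr => -[[|i] lt_i] _; apply: (congr1 (fun n : nat => n%:R^-1)%R).
  by rewrite (take0 rho); exact: (card_Pi_nil_relabel s H).
exact: etrans (card_Pi_take execsH lt_i) (esym (card_Pi_take execH lt_i)).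
Qed.

Section Shears.
Variables (f : encoding) (dl : 'rV[F]_d) (e : F) (s : {perm 'I_tot}).
Hypothesis f_shear : forall c, f (s c) = shear dl e (f c).

Lemma imset_relabel_shear H P : f @: relabel s H P = shear dl e @: (f @: H P).
Proof. by rewrite ffunE -!imset_comp; apply: eq_imset => c; apply: f_shear. Qed.

Lemma max_run_relabel_shear a H : max_run f (a - dl) (relabel s H) = max_run f a H.
Proof.
congr (_ :: _); apply: eq_map => k; congr inr.
rewrite imset_relabel_shear -imset_comp; apply: eq_imset => w /=.
by rewrite proj_shear addrA addrAC addrK.
Qed.

Lemma exec_relabel_shear H rho : rho != [::] -> head tok0 rho = inl f ->
  is_exec H rho -> is_exec (relabel s H) rho.
Proof.
move=> rho_nil rho_f /(execP H rho_nil)[dealH [r + rho_r]].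
case/maxexecP => f' [a [b [f_inj f_surj hA Er]]].
have ff : f' = f.
  by move: rho_r; rewrite Er; case: rho rho_nil rho_f => //= t rho' _ -> /andP[/eqP[->]].
subst f'; apply/(execP _ rho_nil); split; first exact: relabel_deal.
exists r; rewrite // Er; apply/maxexecP.
exists f, (a - dl)%R, (b + e - dot (a - dl) dl)%R; split=> //.
- by rewrite imset_relabel_shear setC_imset ?hA ?shear_hyper //; apply: shear_inj.
- by rewrite max_run_relabel_shear.
Qed.

End Shears.

Lemma exec_transitive rho c c' : is_run m F d tau rho ->
  exists s : {perm 'I_tot}, (forall H, is_exec H rho -> is_exec (relabel s H) rho) /\ s c = c'.
Proof.
case=> H0 execH0; have [rho0 | rho_nil] := eqVneq rho [::].
  exists (tperm c c'); split; last exact: tpermL.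
  by move=> H; rewrite rho0 !exec_nil; apply: relabel_deal.
have [_ [r + rho_r]] := (execP H0 rho_nil).1 execH0.
case/maxexecP => f [a [b [f_inj f_surj _ Er]]].
have rho_f : head tok0 rho = inl f.
  by move: rho_r; rewrite Er; case: rho rho_nil {execH0} => //= t rho' _ /andP[/eqP].
have [dl [e shear_c]] := shear_transitive (f c) (f c').
have [s f_shear] := conj_perm (inj_surj_bij f_inj f_surj) (@shear_inj F d dl e).
exists s; split=> [H | ]; first exact: exec_relabel_shear f_shear H rho rho_nil rho_f.
by apply: f_inj; rewrite f_shear shear_c.
Qed.

Lemma prob_joint_gt0 H rho : is_exec H rho -> (0 < prob_joint H rho)%R.
Proof.
move=> execH; rewrite /prob_joint execH; case/andP: execH => dealH /allP execH.
apply: mulr_gt0; first by rewrite invr_gt0 ltr0n; apply/card_gt0P; exists H; rewrite inE.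
apply: prodr_gt0 => i _; rewrite invr_gt0 ltr0n; apply/card_gt0P; exists (nth tok0 rho i).
by apply: execH; rewrite mem_iota ltn_ord.
Qed.

Lemma prob_joint_ge0 H rho : (0 <= prob_joint H rho)%R.
Proof.
have [/prob_joint_gt0/ltW // | nexec] := boolP (is_exec H rho).
by rewrite /prob_joint (negbTE nexec).
Qed.

Theorem shifted_projection_perfectly_safe : perfectly_safe m F d tau.
Proof.
move=> rho run_rho c P.
pose W E := (\sum_(H | is_exec H rho && E H) prob_joint H rho)%R.
have prob_evE (E : pred deal) : prob_ev E rho = W E.
  rewrite /prob_ev /W !(big_mkcond (fun H => _ && _)) /=; apply: eq_bigr => H _.
  have [/andP[-> _] // | nexec] := boolP (is_exec H rho).
  by rewrite /prob_joint (negbTE nexec) /= if_same.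
have W_predT : W predT = (\sum_(H | is_exec H rho) prob_joint H rho)%R.
  by apply: eq_bigl => H; case: (is_exec H rho).
have W_gt0 : (0 < W predT)%R.
  have [H0 execH0] := run_rho; rewrite W_predT (bigD1 H0) //=.
  by apply: ltr_pwDl (prob_joint_gt0 execH0) (sumr_ge0 _ (fun H _ => prob_joint_ge0 H rho)).
have uniform : (W (fun H => c \in H P) *+ tot = W predT *+ tau P)%R.
  rewrite W_predT.
  apply: (sum_hand_uniform (hand := fun H : deal => H P)) => [H /andP[/is_dealP[-> _ _] _] //|].
  move=> c1 c2; have [s [s_exec s_c]] := exec_transitive c1 c2 run_rho.
  exists (relabel s); split=> [||H|H]; [exact: relabel_inj | exact: s_exec | |].
    by move=> execH; apply: prob_joint_relabel execH (s_exec H execH).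
  by rewrite -s_c mem_relabel.
have tot_gt0 : (0 < tot)%N by apply: leq_ltn_trans (ltn_ord c).
rewrite (prob_evE (fun H => c \in H P)) prob_evE; apply/eqP.
rewrite eqr_div; [|exact: lt0r_neq0 W_gt0 | by rewrite pnatr_eq0 -lt0n].
by rewrite mulr_natr mulr_natl uniform eqxx.
Qed.

End ShiftedProjection.

(** * Parameters *)

Lemma pow2_between m : 0 < m -> exists e, m < 2 ^ e.+1 <= 2 * m.
Proof.
move=> m_gt0; exists (trunc_log 2 m).
by have /andP[lb ub] := trunc_log_bounds (isT : 1 < 2) m_gt0; rewrite ub expnS leq_mul2l lb orbT.
Qed.

(* With r = q^(d-1): B_2, ..., B_m get r + 1 cards each and B_1 gets the rest of the
   q^d cards not held by A. *)
Definition example_tau (m q d : nat) : {ffun option 'I_m -> nat} :=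
  [ffun P => if P is Some k then
               if val k == 0 then q ^ d - m.-1 * (q ^ d.-1 + 1) else q ^ d.-1 + 1
             else q ^ d.+1 - q ^ d].

Section ExampleType.
Variables (m q d : nat).
Hypotheses (m_gt0 : 0 < m) (m_lt_q : m < q) (q_le : q <= 2 * m) (d_gt1 : 1 < d).

Lemma example_tau_bounds P : q ^ d.-1 < example_tau m q d P < 4 * m ^ 2 * q ^ d.-1.
Proof.
set r := q ^ d.-1; have qd : q ^ d = q * r by rewrite -expnS prednK // ltnW.
have q_le_r : q <= r.
  by rewrite -{1}(expn1 q) leq_exp2l ?(leq_ltn_trans m_gt0) // -ltnS prednK // ltnW.
have rB1 : m.-1 * (r + 1) + r < q * r by case: m m_gt0 m_lt_q => // m' _ /= lt_q; nia.
have qqr : q * q * r <= 4 * m ^ 2 * r.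
  by rewrite leq_mul2r (leq_trans (leq_mul q_le q_le)) ?orbT // mulnACA.
by case: P => [k|]; rewrite ffunE ?expnS qd; [case: ifP => _|]; nia.
Qed.

Lemma example_tau_total : Defs.total m (example_tau m q d) = q ^ d.+1.
Proof.
case: m m_gt0 (@example_tau_bounds) => // m' _ bounds.
have /andP[tauA _] := bounds None; have /andP[tauB1 _] := bounds (Some ord0).
rewrite !ffunE /= in tauA tauB1; rewrite /Defs.total sum_option big_ord_recl !ffunE /=.
rewrite (eq_bigr (fun _ => q ^ d.-1 + 1)) => [|k _]; last by rewrite ffunE.
rewrite sum_nat_const card_ord; nia.
Qed.

Lemma example_tau_suitable :
  1 < m -> is_prime_power q -> suitable m q d (example_tau m q d).
Proof.
move=> m_gt1 q_pp; do 4 split=> //; first exact: ltnW.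
split=> [P|]; first by case/andP: (example_tau_bounds P) => /(leq_ltn_trans (leq0n _)).
split; first exact: example_tau_total.
by split=> [|k]; [rewrite ffunE | case/andP: (example_tau_bounds (Some k))].
Qed.

End ExampleType.

Theorem mainTheorem2 :
  forall m : nat, 1 < m ->
  forall n : nat, exists a : nat, n < a /\ 0 < a /\
    exists (F : finFieldType) (d : nat) (tau : {ffun option 'I_m -> nat}),
      suitable m #|F| d tau /\
      (forall P : option 'I_m, a < tau P < 4 * m ^ 2 * a) /\
      informative m F d tau /\
      perfectly_safe m F d tau.
Proof.
move=> m m_gt1 n; have m_gt0 := ltnW m_gt1.
have [e /andP[m_lt_q q_le]] := pow2_between m_gt0.
have [F _ cardF] := pPrimePowerField (isT : prime 2) (ltn0Sn e).
set q := 2 ^ e.+1 in m_lt_q q_le cardF.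
have q_gt1 : 1 < q := leq_ltn_trans m_gt0 m_lt_q.
have suitF : suitable m #|F| n.+2 (example_tau m q n.+2).
  by rewrite cardF; apply: example_tau_suitable => //; exists 2, e.+1.
exists (q ^ n.+1); split; first exact: ltn_trans (ltnSn n) (ltn_expl n.+1 q_gt1).
split; first by rewrite expn_gt0 ltnW.
exists F, n.+2, (example_tau m q n.+2); split=> //; split; first exact: example_tau_bounds.
split; [exact: shifted_projection_informative | exact: shifted_projection_perfectly_safe].
Qed.
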